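(* Consider the asynchronous network Newton method described in the context with $n\ge2$ and stepsize $0<\varepsilon<\min\{1,2(\lambda/\Lambda)^2\}$, and let $\beta=\frac{\alpha m\varepsilon(2\lambda^2-\varepsilon\Lambda^2)}{n\lambda}\in(0,1)$. Then for all $t\ge1$, $$\mathbb{E}\Big[\big\|D(t-1)^{1/2}(x(t)-x^* )\big\|\Big]\le\left(\frac{2\,(2(1-\delta)+\alpha M)\,(1-\beta)^t}{\alpha m}\big(F(x(0))-F^*\big)\right)^{1/2};$$ in particular this sequence converges to $0$ linearly (in expectation).
   Context: Setup. Let $n\ge 1$ be the number of agents and $\alpha>0$ a scalar. $W\in\mathbb{R}^{n\times n}$ is a symmetric nonnegative matrix with $W\mathbb{1}=\mathbb{1}$ (where $\mathbb{1}$ is the all-ones vector), $\mathrm{null}(I-W)=\mathrm{span}\{\mathbb{1}\}$, $0\le W_{ij}<1$ for all $i,j$, and $\delta\le W_{ii}\le\Delta$ for all $i$, for constants $0<\delta\le\Delta<1$. Each $f_i:\mathbb{R}\to\mathbb{R}$ is twice continuously differentiable with $0<m\le f_i''(s)\le M<\infty$ for all $s$ and $|f_i''(a)-f_i''(b)|\le L|a-b|$ for all $a,b$. Define $F(x)=\frac12 x^T(I-W)x+\alpha\sum_{i=1}^n f_i(x_i)$ for $x\in\mathbb{R}^n$, with minimum value $F^*$ and minimizer $x^*$. Let $g(x)=\nabla F(x)$, $G(x)=\mathrm{diag}(f_1''(x_1),\dots,f_n''(x_n))$, $H(x)=\nabla^2F(x)=I-W+\alpha G(x)$. Let $W_d$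 be the diagonal matrix with $[W_d]_{ii}=W_{ii}$, and set $D(x)=\alpha G(x)+2(I-W_d)$ (diagonal, positive definite) and $B=I-2W_d+W$, so $H(x)=D(x)-B$. Define the approximate Hessian inverse $\hat H(x)^{-1}=D(x)^{-1/2}\big(I+D(x)^{-1/2}BD(x)^{-1/2}\big)D(x)^{-1/2}$. Constants: $\rho=\frac{2(1-\delta)}{2(1-\delta)+\alpha m}$, $\Lambda=\frac{1+\rho}{2(1-\Delta)+\alpha m}$, $\lambda=\frac{1}{2(1-\delta)+\alpha M}$. Algorithm (asynchronous network Newton). Given $x(0)\in\mathbb{R}^n$ and stepsize $\varepsilon>0$, let $\Phi(1),\Phi(2),\dots$ be i.i.d. random diagonal $n\times n$ matrices, each equal to $e_ie_i^T$ (the matrix with a single $1$ in position $(i,i)$ and zeros elsewhere) with probability $1/n$ for each $i=1,\dots,n$ (i.e., one uniformly random agent is active per iteration). The iterates are $x(t)=x(t-1)-\varepsilon\,\Phi(t)\hat H(x(t-1))^{-1}g(x(t-1))$, $t\ge1$. Write $g(t)=g(x(t))$, $D(t)=D(x(t))$, $H(t)=H(x(t))$, $\hat H(t)^{-1}=\hat H(x(t))^{-1}$. $\mathcal{F}_t$ denotes the $\sigma$-field generated by $\Phi(1),\dots,\Phi(t)$ (so $x(t)$ is $\mathcal{F}_t$-measurable). *)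

(* classical reals. Vectors in R^n are functions nat -> R,
   only indices 0..n-1 are meaningful; n x n matrices are nat -> nat -> R. *)
From Stdlib Require Import Reals List.
Open Scope R_scope.

Fixpoint rsum (n : nat) (f : nat -> R) : R :=
  match n with O => 0 | S k => rsum k f + f k end.

Definition vec := nat -> R.

Definition Fobj (n : nat) (W : nat -> nat -> R) (alpha : R) (f : nat -> R -> R)
  (x : vec) : R :=
  / 2 * rsum n (fun i => x i * (x i - rsum n (fun j => W i j * x j)))
  + alpha * rsum n (fun i => f i (x i)).

(* g(x) = grad F(x) = (I - W) x + alpha (f_i'(x_i))_i ; f1 i = f_i' *)
Definition grad (n : nat) (W : nat -> nat -> R) (alpha : R) (f1 : nat -> R -> R)
  (x : vec) : vec :=
  fun i => x i - rsum n (fun j => W i j * x j) + alpha * f1 i (x i).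

(* D(x) = alpha G(x) + 2 (I - W_d), as its diagonal; f2 i = f_i'' *)
Definition Ddiag (W : nat -> nat -> R) (alpha : R) (f2 : nat -> R -> R)
  (x : vec) : vec :=
  fun i => alpha * f2 i (x i) + 2 * (1 - W i i).

Definition kron (i j : nat) : R := if Nat.eqb i j then 1 else 0.

Definition Bmat (W : nat -> nat -> R) (i j : nat) : R :=
  kron i j - 2 * (kron i j * W i i) + W i j.

(* Hhat(x)^{-1} v = D^{-1/2} (I + D^{-1/2} B D^{-1/2}) D^{-1/2} v *)
Definition Hinv_apply (n : nat) (W : nat -> nat -> R) (alpha : R)
  (f2 : nat -> R -> R) (x v : vec) : vec :=
  let d := Ddiag W alpha f2 x in
  let w := fun j => / sqrt (d j) * v j in
  fun i => / sqrt (d i) *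
    (w i + rsum n (fun j => / sqrt (d i) * Bmat W i j * / sqrt (d j) * w j)).

(* one iteration with Phi = e_i e_i^T (agent i active) *)
Definition step (n : nat) (W : nat -> nat -> R) (alpha : R)
  (f1 f2 : nat -> R -> R) (eps : R) (x : vec) (i : nat) : vec :=
  fun k => x k - eps * (kron k i * Hinv_apply n W alpha f2 x (grad n W alpha f1 x) k).

(* x(t) along the realisation l = [i_1; ...; i_t] of Phi(1), ..., Phi(t) *)
Definition run (n : nat) (W : nat -> nat -> R) (alpha : R)
  (f1 f2 : nat -> R -> R) (eps : R) (x0 : vec) (l : list nat) : vec :=
  fold_left (step n W alpha f1 f2 eps) l x0.

Fixpoint seqsum (n t : nat) (Z : list nat -> R) : R :=
  match t with
  | O => Z nil
  | S k => rsum n (fun i => seqsum n k (fun l => Z (i :: l)))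
  end.

(* expectation of Z(Phi(1),...,Phi(t)) for Phi i.i.d. uniform over the n agents *)
Definition expect (n t : nat) (Z : list nat -> R) : R :=
  seqsum n t Z / (INR n ^ t).

(* Write P(x) = Hhat(x)^{-1} = D^{-1} + D^{-1} B D^{-1}.  Since B = I - 2 W_d + W is a signless
   Laplacian whose diagonal is 1 - W_ii, we get lam I <= P(x) <= Lam I, hence |P g|^2 <= Lam g.P g.
   Activating agent i moves x along e_i only, so the coordinate-wise quadratic upper bound on F
   applies; averaging over the uniformly chosen agent gives
     E[F(x(t+1))] <= F(x(t)) - (eps/n) g.P g + eps^2 / (2 n lam) |P g|^2,
   and with lam |g|^2 <= g.P g and the Polyak-Lojasiewicz inequality |g|^2 >= 2 alpha m [F - F*]
   this is a contraction of F - F* by 1 - beta.  Strong convexity turns F - F* into a bound on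
   |D^{1/2} [x - x*]|^2, and Jensen's inequality for the square root finishes. *)

From Stdlib Require Import Reals List Lra Lia Psatz.
Open Scope R_scope.

Lemma below_tangent_of_deriv2_nonpos (phi phi1 phi2 : R -> R) (a b : R) :
  (forall x, derivable_pt_lim phi x (phi1 x)) ->
  (forall x, derivable_pt_lim phi1 x (phi2 x)) ->
  (forall x, phi2 x <= 0) ->
  phi b <= phi a + (b - a) * phi1 a.
Proof.
  intros D1 D2 Hconc.
  assert (phi1_antitone : forall x y, x <= y -> phi1 y <= phi1 x).
  { intros x y Hxy. destruct (Req_dec x y) as [<-|Hne]; [lra|].
    destruct (MVT_cor2 phi1 phi2 x y ltac:(lra) (fun c _ => D2 c)) as [c [Hc _]].
    specialize (Hconc c). nra. }
  destruct (Rtotal_order a b) as [Hab|[<-|Hab]]; [| lra |].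
  - destruct (MVT_cor2 phi phi1 a b Hab (fun c _ => D1 c)) as [c [Hc Hin]].
    pose proof (phi1_antitone a c ltac:(lra)). nra.
  - destruct (MVT_cor2 phi phi1 b a Hab (fun c _ => D1 c)) as [c [Hc Hin]].
    pose proof (phi1_antitone c a ltac:(lra)). nra.
Qed.

Lemma taylor_remainder_le (h h1 h2 : R -> R) (K a b : R) :
  (forall x, derivable_pt_lim h x (h1 x)) ->
  (forall x, derivable_pt_lim h1 x (h2 x)) ->
  (forall x, h2 x <= K) ->
  h b - h a - (b - a) * h1 a <= K / 2 * (b - a) ^ 2.
Proof.
  intros D1 D2 HK.
  (* h minus the parabola K x^2 / 2 is concave *)
  assert (Dphi : forall x, derivable_pt_lim (fun y => h y - K / 2 * y ^ 2) x (h1 x - K * x)).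
  { intro x. replace (h1 x - K * x) with (h1 x - K / 2 * (INR 2 * x ^ pred 2)) by (simpl; field).
    apply (derivable_pt_lim_minus h (mult_real_fct (K / 2) (fun y => y ^ 2))); [apply D1|].
    apply derivable_pt_lim_scal, derivable_pt_lim_pow. }
  assert (Dphi1 : forall x, derivable_pt_lim (fun y => h1 y - K * y) x (h2 x - K)).
  { intro x. replace (h2 x - K) with (h2 x - K * 1) by ring.
    apply (derivable_pt_lim_minus h1 (mult_real_fct K id)); [apply D2|].
    apply derivable_pt_lim_scal, derivable_pt_lim_id. }
  pose proof (below_tangent_of_deriv2_nonpos _ _ (fun x => h2 x - K) a b Dphi Dphi1
    (fun x => ltac:(specialize (HK x); lra))).
  nra.
Qed.

Lemma taylor_remainder_ge (h h1 h2 : R -> R) (k a b : R) :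
  (forall x, derivable_pt_lim h x (h1 x)) ->
  (forall x, derivable_pt_lim h1 x (h2 x)) ->
  (forall x, k <= h2 x) ->
  k / 2 * (b - a) ^ 2 <= h b - h a - (b - a) * h1 a.
Proof.
  intros D1 D2 Hk.
  pose proof (taylor_remainder_le (fun x => - h x) (fun x => - h1 x) (fun x => - h2 x) (- k) a b
    (fun x => derivable_pt_lim_opp _ _ _ (D1 x)) (fun x => derivable_pt_lim_opp _ _ _ (D2 x))
    (fun x => ltac:(specialize (Hk x); lra))).
  lra.
Qed.

Lemma rsum_ext n f g : (forall i, (i < n)%nat -> f i = g i) -> rsum n f = rsum n g.
Proof. induction n; simpl; intros H; auto. rewrite IHn, H; auto. Qed.

Lemma rsum_le n f g : (forall i, (i < n)%nat -> f i <= g i) -> rsum n f <= rsum n g.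
Proof.
  induction n; simpl; intros H; [lra|].
  pose proof (IHn (fun i Hi => H i ltac:(lia))). pose proof (H n ltac:(lia)). lra.
Qed.

Lemma rsum_plus n f g : rsum n (fun i => f i + g i) = rsum n f + rsum n g.
Proof. induction n; simpl; [ring|]. rewrite IHn; ring. Qed.

Lemma rsum_minus n f g : rsum n (fun i => f i - g i) = rsum n f - rsum n g.
Proof. induction n; simpl; [ring|]. rewrite IHn; ring. Qed.

Lemma rsum_scal n c f : rsum n (fun i => c * f i) = c * rsum n f.
Proof. induction n; simpl; [ring|]. rewrite IHn; ring. Qed.

Lemma rsum_const n c : rsum n (fun _ => c) = INR n * c.
Proof. induction n; simpl rsum; [simpl; ring|]. rewrite IHn, S_INR; ring. Qed.

Lemma rsum_nonneg n f : (forall i, (i < n)%nat -> 0 <= f i) -> 0 <= rsum n f.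
Proof. intros H. rewrite <- (Rmult_0_r (INR n)), <- rsum_const. apply rsum_le; auto. Qed.

Lemma rsum_swap n p (F : nat -> nat -> R) :
  rsum n (fun i => rsum p (fun j => F i j)) = rsum p (fun j => rsum n (fun i => F i j)).
Proof.
  induction n; simpl.
  - rewrite rsum_const; ring.
  - rewrite IHn, <- rsum_plus. reflexivity.
Qed.

Lemma rsum_kron_l n i h : (i < n)%nat -> rsum n (fun j => kron i j * h j) = h i.
Proof.
  induction n; simpl; intros Hi; [lia|].
  unfold kron at 2. destruct (Nat.eqb_spec i n) as [<-|Hne].
  - rewrite (rsum_ext i _ (fun _ => 0)), rsum_const; [ring|].
    intros j Hj. unfold kron. destruct (Nat.eqb_spec i j); [lia|ring].
  - rewrite IHn by lia. ring.
Qed.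

Lemma kron_sym i j : kron i j = kron j i.
Proof. unfold kron. rewrite Nat.eqb_sym. reflexivity. Qed.

Lemma rsum_kron_r n i h : (i < n)%nat -> rsum n (fun j => kron j i * h j) = h i.
Proof. intros Hi. rewrite <- (rsum_kron_l n i h Hi). apply rsum_ext; intros; rewrite kron_sym; auto. Qed.

Definition dot (n : nat) (u v : vec) : R := rsum n (fun i => u i * v i).

Definition matvec (n : nat) (A : nat -> nat -> R) (v : vec) : vec :=
  fun i => rsum n (fun j => A i j * v j).

Definition bilin (n : nat) (A : nat -> nat -> R) (u v : vec) : R := dot n u (matvec n A v).

Lemma dot_sub_scal n u v p q t :
  dot n (fun k => u k - t * v k) (fun k => p k - t * q k) =
  dot n u p - t * dot n u q - t * dot n v p + t ^ 2 * dot n v q.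
Proof. unfold dot. rewrite <- !rsum_scal, <- !rsum_minus, <- rsum_plus. apply rsum_ext; intros; ring. Qed.

Lemma matvec_plus n A u v i : matvec n A (fun k => u k + v k) i = matvec n A u i + matvec n A v i.
Proof. unfold matvec. rewrite <- rsum_plus. apply rsum_ext; intros; ring. Qed.

Lemma bilin_sym n A u v : (forall i j, (i < n)%nat -> (j < n)%nat -> A i j = A j i) ->
  bilin n A u v = bilin n A v u.
Proof.
  intros Hsym. unfold bilin, dot, matvec.
  transitivity (rsum n (fun i => rsum n (fun j => u i * (A i j * v j)))).
  { apply rsum_ext; intros. rewrite rsum_scal. reflexivity. }
  rewrite rsum_swap. apply rsum_ext; intros j Hj. rewrite <- rsum_scal.
  apply rsum_ext; intros i Hi. rewrite Hsym by auto. ring.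
Qed.

Section StochasticMatrix.
Variables (n : nat) (W : nat -> nat -> R).
Hypothesis hWsym : forall i j, (i < n)%nat -> (j < n)%nat -> W i j = W j i.
Hypothesis hWnn : forall i j, (i < n)%nat -> (j < n)%nat -> 0 <= W i j.
Hypothesis hWrow : forall i, (i < n)%nat -> rsum n (fun j => W i j) = 1.

Lemma rsum_col_stochastic j : (j < n)%nat -> rsum n (fun i => W i j) = 1.
Proof. intros Hj. rewrite <- (hWrow j Hj). apply rsum_ext; intros. apply hWsym; auto. Qed.

Lemma W_diag_le_1 i : (i < n)%nat -> W i i <= 1.
Proof.
  intros Hi. rewrite <- (hWrow i Hi), <- (rsum_kron_l n i (W i)) by auto.
  apply rsum_le; intros j Hj. pose proof (hWnn i j Hi Hj).
  unfold kron; destruct (Nat.eqb_spec i j); lra.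
Qed.

Lemma rsum_weighted_sq y s :
  rsum n (fun i => rsum n (fun j => W i j * (y i + s * y j) ^ 2)) =
  (1 + s ^ 2) * dot n y y + 2 * s * bilin n W y y.
Proof.
  transitivity (rsum n (fun i => y i * y i * rsum n (fun j => W i j))
    + s ^ 2 * rsum n (fun i => rsum n (fun j => W i j * (y j * y j))) + 2 * s * bilin n W y y).
  - unfold bilin, dot, matvec. rewrite <- !rsum_scal, <- !rsum_plus. apply rsum_ext; intros i Hi.
    rewrite <- !rsum_scal, <- !rsum_plus. apply rsum_ext; intros; ring.
  - rewrite rsum_swap.
    rewrite (rsum_ext n (fun i => y i * y i * rsum n (fun j => W i j)) (fun i => y i * y i))
      by (intros; rewrite hWrow by auto; ring).
    rewrite (rsum_ext n (fun j => rsum n (fun i => W i j * (y j * y j))) (fun i => y i * y i)).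
    + unfold dot. ring.
    + intros j Hj. rewrite (rsum_ext n _ (fun i => y j * y j * W i j)) by (intros; ring).
      rewrite rsum_scal, rsum_col_stochastic by auto. ring.
Qed.

Lemma bilin_le_dot y : bilin n W y y <= dot n y y.
Proof.
  pose proof (rsum_weighted_sq y (-1)) as E.
  assert (0 <= rsum n (fun i => rsum n (fun j => W i j * (y i + -1 * y j) ^ 2))).
  { apply rsum_nonneg; intros i Hi; apply rsum_nonneg; intros j Hj.
    apply Rmult_le_pos; [auto | apply pow2_ge_0]. }
  lra.
Qed.

Lemma Bmat_sym i j : (i < n)%nat -> (j < n)%nat -> Bmat W i j = Bmat W j i.
Proof.
  intros Hi Hj. unfold Bmat. rewrite (hWsym i j), (kron_sym i j) by auto.
  unfold kron. destruct (Nat.eqb_spec j i) as [->|]; ring.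
Qed.

Lemma matvec_Bmat z i : (i < n)%nat ->
  matvec n (Bmat W) z i = (1 - 2 * W i i) * z i + matvec n W z i.
Proof.
  intros Hi. unfold matvec, Bmat.
  rewrite (rsum_ext n _ (fun j => kron i j * ((1 - 2 * W i i) * z j) + W i j * z j)) by (intros; ring).
  rewrite rsum_plus, rsum_kron_l by auto. reflexivity.
Qed.

Lemma bilin_Bmat y :
  bilin n (Bmat W) y y = dot n y y - 2 * rsum n (fun i => W i i * (y i * y i)) + bilin n W y y.
Proof.
  unfold bilin at 1, dot at 1.
  rewrite (rsum_ext n _ (fun i => y i * y i - 2 * (W i i * (y i * y i)) + y i * matvec n W y i))
    by (intros; rewrite matvec_Bmat by auto; ring).
  rewrite rsum_plus, rsum_minus, rsum_scal. reflexivity.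
Qed.

(* y.B y = 1/2 sum_{i <> j} W_ij (y_i + y_j)^2 *)
Lemma bilin_Bmat_nonneg y : 0 <= bilin n (Bmat W) y y.
Proof.
  assert (E : rsum n (fun i => rsum n (fun j => (W i j - kron i j * W i i) * (y i + 1 * y j) ^ 2))
              = 2 * bilin n (Bmat W) y y).
  { rewrite (rsum_ext n _ (fun i => rsum n (fun j => W i j * (y i + 1 * y j) ^ 2)
                                   - 4 * (W i i * (y i * y i)))).
    - rewrite rsum_minus, rsum_weighted_sq, rsum_scal, bilin_Bmat. ring.
    - intros i Hi.
      rewrite (rsum_ext n _ (fun j => W i j * (y i + 1 * y j) ^ 2 - kron i j * (W i i * (y i + 1 * y j) ^ 2)))
        by (intros; ring).
      rewrite rsum_minus, rsum_kron_l by auto. ring. }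
  assert (0 <= rsum n (fun i => rsum n (fun j => (W i j - kron i j * W i i) * (y i + 1 * y j) ^ 2))).
  { apply rsum_nonneg; intros i Hi; apply rsum_nonneg; intros j Hj.
    apply Rmult_le_pos; [|apply pow2_ge_0].
    unfold kron. destruct (Nat.eqb_spec i j) as [<-|]; [lra|].
    pose proof (hWnn i j Hi Hj). lra. }
  lra.
Qed.

Lemma bilin_Bmat_le y : bilin n (Bmat W) y y <= 2 * rsum n (fun i => (1 - W i i) * (y i * y i)).
Proof.
  rewrite bilin_Bmat. pose proof (bilin_le_dot y).
  rewrite (rsum_ext n (fun i => (1 - W i i) * (y i * y i)) (fun i => y i * y i - W i i * (y i * y i)))
    by (intros; ring).
  rewrite rsum_minus. unfold dot in *. lra.
Qed.

End StochasticMatrix.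

Section Expectation.
Variable N : nat.
Hypothesis hN : (0 < N)%nat.

Lemma seqsum_le t : forall Z Y, (forall l, Z l <= Y l) -> seqsum N t Z <= seqsum N t Y.
Proof. induction t; simpl; intros Z Y H; auto. apply rsum_le; intros; apply IHt; auto. Qed.

Lemma seqsum_plus t : forall Z Y, seqsum N t (fun l => Z l + Y l) = seqsum N t Z + seqsum N t Y.
Proof.
  induction t; simpl; intros; auto.
  rewrite (rsum_ext N _ (fun i => seqsum N t (fun l => Z (i :: l)) + seqsum N t (fun l => Y (i :: l))))
    by (intros; apply IHt).
  apply rsum_plus.
Qed.

Lemma seqsum_scal t : forall c Z, seqsum N t (fun l => c * Z l) = c * seqsum N t Z.
Proof.
  induction t; simpl; intros; auto.
  rewrite (rsum_ext N _ (fun i => c * seqsum N t (fun l => Z (i :: l)))) by (intros; apply IHt).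
  apply rsum_scal.
Qed.

Lemma seqsum_const t c : seqsum N t (fun _ => c) = c * INR N ^ t.
Proof.
  induction t; simpl; [ring|].
  rewrite (rsum_ext N _ (fun _ => c * INR N ^ t)) by (intros; apply IHt).
  rewrite rsum_const; ring.
Qed.

Lemma INR_pow_pos t : 0 < INR N ^ t.
Proof. apply pow_lt, lt_0_INR; auto. Qed.

Lemma expect_le t Z Y : (forall l, Z l <= Y l) -> expect N t Z <= expect N t Y.
Proof.
  intros H. unfold expect, Rdiv. apply Rmult_le_compat_r.
  - left; apply Rinv_0_lt_compat, INR_pow_pos.
  - apply seqsum_le; auto.
Qed.

Lemma expect_plus t Z Y : expect N t (fun l => Z l + Y l) = expect N t Z + expect N t Y.
Proof. unfold expect. rewrite seqsum_plus. unfold Rdiv; ring. Qed.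

Lemma expect_scal t c Z : expect N t (fun l => c * Z l) = c * expect N t Z.
Proof. unfold expect. rewrite seqsum_scal. unfold Rdiv; ring. Qed.

Lemma expect_const t c : expect N t (fun _ => c) = c.
Proof. unfold expect. rewrite seqsum_const. field. apply Rgt_not_eq, INR_pow_pos. Qed.

Lemma expect_cons t Z : expect N (S t) Z = / INR N * rsum N (fun i => expect N t (fun l => Z (i :: l))).
Proof.
  unfold expect, Rdiv. simpl seqsum.
  rewrite (rsum_ext N (fun i => seqsum N t (fun l => Z (i :: l)) * / INR N ^ t)
    (fun i => / INR N ^ t * seqsum N t (fun l => Z (i :: l)))) by (intros; ring).
  rewrite rsum_scal. simpl pow. rewrite Rinv_mult. ring.
Qed.

Lemma expect_sqrt_le t Y : (forall l, 0 <= Y l) -> expect N t (fun l => sqrt (Y l)) <= sqrt (expect N t Y).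
Proof.
  intros HY. set (c := expect N t (fun l => sqrt (Y l))).
  (* Jensen: 0 <= E[(sqrt Y - c)^2] = E[Y] - c^2 *)
  assert (Hvar : 0 <= expect N t (fun l => Y l + (- 2 * c * sqrt (Y l) + c ^ 2))).
  { rewrite <- (expect_const t 0). apply expect_le; intros l.
    replace (Y l + (- 2 * c * sqrt (Y l) + c ^ 2)) with ((sqrt (Y l) - c) ^ 2).
    - apply pow2_ge_0.
    - rewrite <- (sqrt_sqrt (Y l) (HY l)) at 2. ring. }
  rewrite !expect_plus, expect_scal, expect_const in Hvar. fold c in Hvar.
  destruct (Rle_or_lt c 0).
  - pose proof (sqrt_pos (expect N t Y)). lra.
  - rewrite <- (sqrt_square c) by lra. apply sqrt_le_1_alt. nra.
Qed.

Lemma expect_fold_left_le {S : Type} (step : S -> nat -> S) (V : S -> R) (q : R) :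
  0 <= q -> (forall x, / INR N * rsum N (fun i => V (step x i)) <= q * V x) ->
  forall t x0, expect N t (fun l => V (fold_left step l x0)) <= q ^ t * V x0.
Proof.
  intros Hq Hcontr. induction t; intros x0.
  - unfold expect. simpl. lra.
  - rewrite expect_cons. simpl fold_left.
    apply Rle_trans with (/ INR N * rsum N (fun i => q ^ t * V (step x0 i))).
    + apply Rmult_le_compat_l; [left; apply Rinv_0_lt_compat, lt_0_INR; auto|].
      apply rsum_le; intros i _. apply IHt.
    + rewrite rsum_scal. simpl pow.
      replace (/ INR N * (q ^ t * rsum N (fun i => V (step x0 i))))
        with (q ^ t * (/ INR N * rsum N (fun i => V (step x0 i)))) by ring.
      replace (q * q ^ t * V x0) with (q ^ t * (q * V x0)) by ring.
      apply Rmult_le_compat_l; [apply pow_le; auto | apply Hcontr].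
Qed.

End Expectation.

Section SymmetricOperator.
Variables (n : nat) (A : vec -> vec) (c : R).
Hypothesis hc : 0 < c.
Hypothesis hA_lin : forall u w t i, (i < n)%nat -> A (fun k => u k - t * w k) i = A u i - t * A w i.
Hypothesis hA_sym : forall u v, dot n u (A v) = dot n v (A u).
Hypothesis hA_nonneg : forall v, 0 <= dot n v (A v).
Hypothesis hA_le : forall v, dot n v (A v) <= c * dot n v v.

Lemma dot_op_op_le v : dot n (A v) (A v) <= c * dot n v (A v).
Proof.
  (* expand 0 <= <w, A w> at w = v - A v / c *)
  pose proof (hA_nonneg (fun k => v k - / c * A v k)) as H.
  unfold dot at 1 in H.
  rewrite (rsum_ext n _ (fun k => (v k - / c * A v k) * (A v k - / c * A (A v) k))) in H
    by (intros; rewrite hA_lin by auto; reflexivity).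
  fold (dot n (fun k => v k - / c * A v k) (fun k => A v k - / c * A (A v) k)) in H.
  rewrite dot_sub_scal, (hA_sym v (A v)) in H.
  pose proof (hA_le (A v)).
  assert ((/ c) ^ 2 * dot n (A v) (A (A v)) <= / c * dot n (A v) (A v)).
  { replace (/ c * dot n (A v) (A v)) with ((/ c) ^ 2 * (c * dot n (A v) (A v))) by (field; lra).
    apply Rmult_le_compat_l; [apply pow2_ge_0 | auto]. }
  assert (0 <= dot n v (A v) - / c * dot n (A v) (A v)) by lra.
  apply (Rmult_le_compat_l c) in H2; [|lra].
  replace (c * (dot n v (A v) - / c * dot n (A v) (A v))) with (c * dot n v (A v) - dot n (A v) (A v)) in H2
    by (field; lra).
  lra.
Qed.

End SymmetricOperator.

Definition lam (delta alpha M : R) : R := 1 / (2 * (1 - delta) + alpha * M).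

Definition Lam (delta Delta alpha m : R) : R :=
  (1 + 2 * (1 - delta) / (2 * (1 - delta) + alpha * m)) / (2 * (1 - Delta) + alpha * m).

Lemma ratio_le_ratio a b c e : 0 <= b <= c -> 0 < e <= a -> b / (a + b) <= c / (c + e).
Proof.
  intros [Hb Hbc] [He Hea].
  apply (Rmult_le_reg_r ((a + b) * (c + e))); [apply Rmult_lt_0_compat; lra|].
  replace (b / (a + b) * ((a + b) * (c + e))) with (b * (c + e)) by (field; lra).
  replace (c / (c + e) * ((a + b) * (c + e))) with (c * (a + b)) by (field; lra).
  nra.
Qed.

Lemma lam_pos delta alpha M : delta < 1 -> 0 < alpha -> 0 < M -> 0 < lam delta alpha M.
Proof.
  intros. assert (0 < alpha * M) by (apply Rmult_lt_0_compat; lra).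
  unfold lam. apply Rdiv_lt_0_compat; lra.
Qed.

Lemma Lam_pos delta Delta alpha m : delta <= Delta -> Delta < 1 -> 0 < alpha -> 0 < m ->
  0 < Lam delta Delta alpha m.
Proof.
  intros. assert (0 < alpha * m) by (apply Rmult_lt_0_compat; lra).
  unfold Lam. apply Rdiv_lt_0_compat; [|lra].
  assert (0 <= 2 * (1 - delta) / (2 * (1 - delta) + alpha * m)) by (apply Rle_mult_inv_pos; lra). lra.
Qed.


Definition beta (n : nat) (alpha m M delta Delta eps : R) : R :=
  alpha * m * eps * (2 * lam delta alpha M ^ 2 - eps * Lam delta Delta alpha m ^ 2)
  / (INR n * lam delta alpha M).


Lemma beta_bounds n alpha m M delta Delta eps :
  (2 <= n)%nat -> 0 < alpha -> delta <= Delta -> Delta < 1 -> 0 < m <= M -> 0 < eps ->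
  eps < Rmin 1 (2 * (lam delta alpha M / Lam delta Delta alpha m) ^ 2) ->
  0 < 2 * lam delta alpha M ^ 2 - eps * Lam delta Delta alpha m ^ 2 /\
  0 < beta n alpha m M delta Delta eps < 1.
Proof.
  intros Hn Ha HdD HD [Hm HmM] He Hlt.
  assert (Hl : 0 < lam delta alpha M) by (apply lam_pos; lra).
  assert (HL : 0 < Lam delta Delta alpha m) by (apply Lam_pos; lra).
  assert (Haml : alpha * m * lam delta alpha M < 1).
  { assert (alpha * m <= alpha * M) by (apply Rmult_le_compat_l; lra).
    assert (0 < alpha * m) by (apply Rmult_lt_0_compat; lra).
    unfold lam. replace (alpha * m * (1 / (2 * (1 - delta) + alpha * M)))
      with (alpha * m / (2 * (1 - delta) + alpha * M)) by (field; lra).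
    apply (Rmult_lt_reg_r (2 * (1 - delta) + alpha * M)); [lra|].
    unfold Rdiv. rewrite Rmult_assoc, Rinv_l; lra. }
  unfold beta. set (l := lam delta alpha M) in *. set (L := Lam delta Delta alpha m) in *.
  assert (Hgap : eps * L ^ 2 < 2 * l ^ 2).
  { replace (2 * l ^ 2) with (2 * (l / L) ^ 2 * L ^ 2) by (field; lra).
    apply Rmult_lt_compat_r; [apply pow_lt; lra|].
    eapply Rlt_le_trans; [exact Hlt | apply Rmin_r]. }
  assert (He1 : eps < 1) by (eapply Rlt_le_trans; [exact Hlt | apply Rmin_l]).
  assert (Hn2 : 2 <= INR n) by (replace 2 with (INR 2) by (simpl; ring); apply le_INR; auto).
  assert (Ham : 0 < alpha * m) by (apply Rmult_lt_0_compat; lra).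
  split; [lra|]. split.
  - apply Rdiv_lt_0_compat; [repeat apply Rmult_lt_0_compat | apply Rmult_lt_0_compat]; lra.
  - apply (Rmult_lt_reg_r (INR n * l)); [apply Rmult_lt_0_compat; lra|].
    unfold Rdiv. rewrite Rmult_assoc, Rinv_l, Rmult_1_r, Rmult_1_l
      by (apply Rgt_not_eq, Rmult_lt_0_compat; lra).
    (* numerator <= eps * 2 l * (alpha m l) < 2 l <= n l *)
    assert (alpha * m * eps * (2 * l ^ 2 - eps * L ^ 2) <= eps * (2 * l * (alpha * m * l))).
    { assert (0 <= alpha * m * eps * (eps * L ^ 2))
        by (apply Rmult_le_pos; [apply Rmult_le_pos | apply Rmult_le_pos; [| apply pow2_ge_0]]; lra).
      lra. }
    assert (eps * (2 * l * (alpha * m * l)) < 1 * (2 * l * 1)).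
    { apply Rmult_le_0_lt_compat; try lra.
      - apply Rmult_le_pos; [lra | apply Rmult_le_pos; lra].
      - apply Rmult_lt_compat_l; lra. }
    nra.
Qed.

Section AsyncNetworkNewton.
Variables (n : nat) (W : nat -> nat -> R) (alpha m M delta Delta : R) (f f1 f2 : nat -> R -> R).
Hypothesis halpha : 0 < alpha.
Hypothesis hdD : delta <= Delta.
Hypothesis hDelta : Delta < 1.
Hypothesis hWsym : forall i j, (i < n)%nat -> (j < n)%nat -> W i j = W j i.
Hypothesis hWnn : forall i j, (i < n)%nat -> (j < n)%nat -> 0 <= W i j.
Hypothesis hWrow : forall i, (i < n)%nat -> rsum n (fun j => W i j) = 1.
Hypothesis hWdiag : forall i, (i < n)%nat -> delta <= W i i <= Delta.
Hypothesis hf1 : forall i s, (i < n)%nat -> derivable_pt_lim (f i) s (f1 i s).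
Hypothesis hf2 : forall i s, (i < n)%nat -> derivable_pt_lim (f1 i) s (f2 i s).
Hypothesis hm : 0 < m.
Hypothesis hmM : forall i s, (i < n)%nat -> m <= f2 i s <= M.

Notation F := (Fobj n W alpha f).
Notation g := (grad n W alpha f1).

Lemma alpha_m_pos : 0 < alpha * m.
Proof. apply Rmult_lt_0_compat; assumption. Qed.

Lemma Fobj_ext x y : (forall k, (k < n)%nat -> x k = y k) -> F x = F y.
Proof.
  intros H. unfold Fobj. f_equal; f_equal; apply rsum_ext; intros k Hk; rewrite H by auto; [|reflexivity].
  f_equal. f_equal. apply rsum_ext; intros; rewrite H; auto.
Qed.

Definition taylor_rem (x d : vec) : R :=
  rsum n (fun k => f k (x k + d k) - f k (x k) - d k * f1 k (x k)).

Lemma Fobj_shift x d : F (fun k => x k + d k) =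
  F x + dot n (g x) d + / 2 * (dot n d d - bilin n W d d) + alpha * taylor_rem x d.
Proof.
  unfold Fobj, dot, grad, taylor_rem.
  assert (Equad : rsum n (fun i => (x i + d i) * (x i + d i - rsum n (fun j => W i j * (x j + d j)))) =
     rsum n (fun i => x i * (x i - rsum n (fun j => W i j * x j)))
     + 2 * rsum n (fun i => d i * (x i - matvec n W x i))
     + (rsum n (fun i => d i * d i) - bilin n W d d) + (bilin n W d x - bilin n W x d)).
  { unfold bilin, dot. rewrite <- rsum_scal, <- !rsum_minus, <- !rsum_plus. apply rsum_ext; intros i Hi.
    fold (matvec n W (fun j => x j + d j) i). rewrite matvec_plus. unfold matvec. ring. }
  assert (Esep : rsum n (fun i => f i (x i + d i)) = rsum n (fun i => f i (x i))
     + rsum n (fun i => f1 i (x i) * d i) + rsum n (fun k => f k (x k + d k) - f k (x k) - d k * f1 k (x k))).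
  { rewrite <- !rsum_plus. apply rsum_ext; intros; ring. }
  assert (Egrad : rsum n (fun i => (x i - rsum n (fun j => W i j * x j) + alpha * f1 i (x i)) * d i) =
     rsum n (fun i => d i * (x i - matvec n W x i)) + alpha * rsum n (fun i => f1 i (x i) * d i)).
  { rewrite <- rsum_scal, <- rsum_plus. apply rsum_ext; intros; unfold matvec; ring. }
  rewrite Equad, Esep, Egrad, (bilin_sym n W d x hWsym). field.
Qed.

Lemma taylor_rem_le x d : taylor_rem x d <= M / 2 * dot n d d.
Proof.
  unfold taylor_rem, dot. rewrite <- rsum_scal. apply rsum_le; intros k Hk.
  pose proof (taylor_remainder_le (f k) (f1 k) (f2 k) M (x k) (x k + d k)
    (fun s => hf1 k s Hk) (fun s => hf2 k s Hk) (fun s => proj2 (hmM k s Hk))).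
  replace (x k + d k - x k) with (d k) in H by ring. lra.
Qed.

Lemma taylor_rem_ge x d : m / 2 * dot n d d <= taylor_rem x d.
Proof.
  unfold taylor_rem, dot. rewrite <- rsum_scal. apply rsum_le; intros k Hk.
  pose proof (taylor_remainder_ge (f k) (f1 k) (f2 k) m (x k) (x k + d k)
    (fun s => hf1 k s Hk) (fun s => hf2 k s Hk) (fun s => proj1 (hmM k s Hk))).
  replace (x k + d k - x k) with (d k) in H by ring. lra.
Qed.

Lemma Fobj_strongly_convex x d :
  F x + dot n (g x) d + alpha * m / 2 * dot n d d <= F (fun k => x k + d k).
Proof.
  rewrite Fobj_shift. pose proof (taylor_rem_ge x d). pose proof (bilin_le_dot n W hWsym hWnn hWrow d).
  assert (alpha * (m / 2 * dot n d d) <= alpha * taylor_rem x d) by (apply Rmult_le_compat_l; lra).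
  lra.
Qed.

Lemma Fobj_coord_smooth x i s : (i < n)%nat ->
  F (fun k => x k + s * kron k i) <= F x + s * g x i + s ^ 2 / 2 * (1 - W i i + alpha * M).
Proof.
  intros Hi. rewrite Fobj_shift.
  assert (Eg : dot n (g x) (fun k => s * kron k i) = s * g x i).
  { unfold dot. rewrite <- (rsum_kron_r n i (fun k => s * g x k)) by auto. apply rsum_ext; intros; ring. }
  assert (Ee : dot n (fun k => s * kron k i) (fun k => s * kron k i) = s ^ 2).
  { unfold dot. rewrite (rsum_ext n _ (fun k => kron k i * (s ^ 2 * kron k i))) by (intros; ring).
    rewrite rsum_kron_r by auto. unfold kron; rewrite Nat.eqb_refl; ring. }
  assert (EW : bilin n W (fun k => s * kron k i) (fun k => s * kron k i) = s ^ 2 * W i i).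
  { unfold bilin, dot, matvec. rewrite (rsum_ext n _ (fun k => kron k i * (s ^ 2 * W k i))).
    - rewrite rsum_kron_r by auto; ring.
    - intros k Hk. rewrite (rsum_ext n _ (fun j => kron j i * (s * W k j))) by (intros; ring).
      rewrite rsum_kron_r by auto. ring. }
  pose proof (taylor_rem_le x (fun k => s * kron k i)).
  assert (alpha * taylor_rem x (fun k => s * kron k i) <= alpha * (M / 2 * s ^ 2))
    by (rewrite <- Ee; apply Rmult_le_compat_l; lra).
  rewrite Eg, Ee, EW. lra.
Qed.

Variable xs : vec.
Hypothesis hxs : forall y : vec, F xs <= F y.

Lemma grad_minimizer i : (i < n)%nat -> g xs i = 0.
Proof.
  intros Hi.
  assert (Hc : 0 < 1 - W i i + alpha * M).
  { pose proof (hmM i 0 Hi). pose proof (W_diag_le_1 n W hWnn hWrow i Hi).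
    assert (0 < alpha * M) by (apply Rmult_lt_0_compat; lra). lra. }
  (* a coordinate step of length -g_i / c lowers F by g_i^2 / (2c) *)
  pose proof (Fobj_coord_smooth xs i (- g xs i / (1 - W i i + alpha * M)) Hi) as Hstep.
  pose proof (hxs (fun k => xs k + - g xs i / (1 - W i i + alpha * M) * kron k i)) as Hmin.
  set (c := 1 - W i i + alpha * M) in *. set (gi := g xs i) in *.
  replace (F xs + - gi / c * gi + (- gi / c) ^ 2 / 2 * c) with (F xs - gi * gi * / (2 * c)) in Hstep
    by (field; lra).
  assert (Hinv : 0 < / (2 * c)) by (apply Rinv_0_lt_compat; lra).
  assert (gi * gi * / (2 * c) <= 0) by lra.
  apply Rsqr_0_uniq, Rle_antisym; [unfold Rsqr; nra | apply Rle_0_sqr].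
Qed.

Lemma quadratic_growth x :
  alpha * m / 2 * dot n (fun k => x k - xs k) (fun k => x k - xs k) <= F x - F xs.
Proof.
  pose proof (Fobj_strongly_convex xs (fun k => x k - xs k)) as H. cbv beta in H.
  rewrite (Fobj_ext (fun k => xs k + (x k - xs k)) x) in H by (intros; ring).
  assert (dot n (g xs) (fun k => x k - xs k) = 0).
  { unfold dot. rewrite (rsum_ext n _ (fun _ => 0)), rsum_const; [ring|].
    intros; rewrite grad_minimizer by auto; ring. }
  lra.
Qed.

(* Minimise the strong-convexity lower bound over d. *)
Lemma polyak_lojasiewicz x : 2 * alpha * m * (F x - F xs) <= dot n (g x) (g x).
Proof.
  pose proof alpha_m_pos as Ham.
  pose proof (Fobj_strongly_convex x (fun k => xs k - x k)) as H. cbv beta in H.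
  rewrite (Fobj_ext (fun k => x k + (xs k - x k)) xs) in H by (intros; ring).
  set (d := fun k => xs k - x k) in H.
  assert (Hsq : 0 <= dot n (g x) d + alpha * m / 2 * dot n d d + / (2 * (alpha * m)) * dot n (g x) (g x)).
  { unfold dot. rewrite <- !rsum_scal, <- !rsum_plus. apply rsum_nonneg; intros i _.
    replace (g x i * d i + alpha * m / 2 * (d i * d i) + / (2 * (alpha * m)) * (g x i * g x i))
      with ((alpha * m * d i + g x i) ^ 2 * / (2 * (alpha * m))) by (field; lra).
    apply Rmult_le_pos; [apply pow2_ge_0|]. left; apply Rinv_0_lt_compat; lra. }
  assert (Hgap : F x - F xs <= / (2 * (alpha * m)) * dot n (g x) (g x)) by lra.
  apply (Rmult_le_compat_l (2 * (alpha * m))) in Hgap; [|lra].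
  replace (2 * (alpha * m) * (/ (2 * (alpha * m)) * dot n (g x) (g x))) with (dot n (g x) (g x)) in Hgap
    by (field; lra).
  lra.
Qed.

Notation D := (Ddiag W alpha f2).

Lemma Ddiag_bounds x i : (i < n)%nat ->
  2 * (1 - Delta) + alpha * m <= D x i <= 2 * (1 - delta) + alpha * M.
Proof.
  intros Hi. unfold Ddiag. pose proof (hmM i (x i) Hi). pose proof (hWdiag i Hi).
  assert (alpha * m <= alpha * f2 i (x i)) by (apply Rmult_le_compat_l; lra).
  assert (alpha * f2 i (x i) <= alpha * M) by (apply Rmult_le_compat_l; lra).
  lra.
Qed.

Lemma Ddiag_pos x i : (i < n)%nat -> 0 < D x i.
Proof.
  intros Hi. pose proof (Ddiag_bounds x i Hi).
  pose proof alpha_m_pos. lra.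
Qed.

(* Hhat(x)^{-1} = D^{-1} + D^{-1} B D^{-1}, without square roots *)
Definition newton_op (x v : vec) : vec :=
  fun i => v i / D x i + / D x i * matvec n (Bmat W) (fun j => v j / D x j) i.

Lemma Hinv_apply_eq x v i : (i < n)%nat -> Hinv_apply n W alpha f2 x v i = newton_op x v i.
Proof.
  intros Hi.
  assert (inv_sqrt_sq : forall a, 0 < a -> / sqrt a * / sqrt a = / a).
  { intros a Ha. rewrite <- Rinv_mult, sqrt_sqrt; lra. }
  unfold Hinv_apply, newton_op, matvec. cbv zeta.
  rewrite (rsum_ext n _ (fun j => / sqrt (D x i) * (Bmat W i j * (v j / D x j)))).
  - rewrite rsum_scal. unfold Rdiv. rewrite <- (inv_sqrt_sq (D x i)) by (apply Ddiag_pos; auto). ring.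
  - intros j Hj. unfold Rdiv. rewrite <- (inv_sqrt_sq (D x j)) by (apply Ddiag_pos; auto). ring.
Qed.

Lemma newton_op_sub x u w t i : (i < n)%nat ->
  newton_op x (fun k => u k - t * w k) i = newton_op x u i - t * newton_op x w i.
Proof.
  intros Hi. unfold newton_op, matvec.
  rewrite (rsum_ext n _ (fun j => Bmat W i j * (u j / D x j) - t * (Bmat W i j * (w j / D x j))))
    by (intros; unfold Rdiv; ring).
  rewrite rsum_minus, rsum_scal. unfold Rdiv. ring.
Qed.

Lemma dot_newton_op x u v : dot n u (newton_op x v) =
  rsum n (fun i => u i * v i / D x i) + bilin n (Bmat W) (fun j => u j / D x j) (fun j => v j / D x j).
Proof. unfold bilin, dot, newton_op. rewrite <- rsum_plus. apply rsum_ext; intros. unfold Rdiv. ring. Qed.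

Lemma newton_op_sym x u v : dot n u (newton_op x v) = dot n v (newton_op x u).
Proof.
  rewrite !dot_newton_op, (bilin_sym n (Bmat W) _ _ (Bmat_sym n W hWsym)).
  f_equal. apply rsum_ext; intros. unfold Rdiv. ring.
Qed.

Lemma newton_op_nonneg x v : 0 <= dot n v (newton_op x v).
Proof.
  rewrite dot_newton_op. pose proof (bilin_Bmat_nonneg n W hWsym hWnn hWrow (fun j => v j / D x j)).
  assert (0 <= rsum n (fun i => v i * v i / D x i)).
  { apply rsum_nonneg; intros i Hi. apply Rle_mult_inv_pos; [apply Rle_0_sqr | apply Ddiag_pos; auto]. }
  lra.
Qed.

Lemma newton_op_ge x v : lam delta alpha M * dot n v v <= dot n v (newton_op x v).
Proof.
  rewrite dot_newton_op. pose proof (bilin_Bmat_nonneg n W hWsym hWnn hWrow (fun j => v j / D x j)).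
  assert (lam delta alpha M * dot n v v <= rsum n (fun i => v i * v i / D x i)); [|lra].
  unfold dot. rewrite <- rsum_scal. apply rsum_le; intros i Hi.
  pose proof (Ddiag_bounds x i Hi). pose proof (Ddiag_pos x i Hi).
  unfold lam, Rdiv. rewrite Rmult_1_l, (Rmult_comm (/ _)).
  apply Rmult_le_compat_l; [apply Rle_0_sqr | apply Rinv_le_contravar; lra].
Qed.

Lemma newton_op_le x v : dot n v (newton_op x v) <= Lam delta Delta alpha m * dot n v v.
Proof.
  rewrite dot_newton_op. pose proof (bilin_Bmat_le n W hWsym hWnn hWrow (fun j => v j / D x j)).
  assert (rsum n (fun i => v i * v i / D x i)
          + 2 * rsum n (fun i => (1 - W i i) * (v i / D x i * (v i / D x i)))
          <= Lam delta Delta alpha m * dot n v v); [|lra].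
  unfold dot. rewrite <- !rsum_scal, <- rsum_plus. apply rsum_le; intros i Hi.
  pose proof (Ddiag_bounds x i Hi). pose proof (Ddiag_pos x i Hi). pose proof (hWdiag i Hi).
  pose proof (hmM i (x i) Hi). pose proof alpha_m_pos.
  assert (Hratio : 2 * (1 - W i i) / D x i <= 2 * (1 - delta) / (2 * (1 - delta) + alpha * m)).
  { unfold Ddiag. apply ratio_le_ratio; split; try lra. apply Rmult_le_compat_l; lra. }
  assert (Hfactor : / D x i * (1 + 2 * (1 - W i i) / D x i) <= Lam delta Delta alpha m).
  { replace (Lam delta Delta alpha m)
      with (/ (2 * (1 - Delta) + alpha * m) * (1 + 2 * (1 - delta) / (2 * (1 - delta) + alpha * m)))
      by (unfold Lam, Rdiv; ring).
    assert (0 <= 2 * (1 - W i i) / D x i) by (apply Rle_mult_inv_pos; lra).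
    apply Rmult_le_compat; [left; apply Rinv_0_lt_compat | | apply Rinv_le_contravar |]; lra. }
  replace (v i * v i / D x i + 2 * ((1 - W i i) * (v i / D x i * (v i / D x i))))
    with (v i * v i * (/ D x i * (1 + 2 * (1 - W i i) / D x i))) by (field; lra).
  rewrite (Rmult_comm (Lam _ _ _ _)). apply Rmult_le_compat_l; [apply Rle_0_sqr | exact Hfactor].
Qed.

Lemma newton_op_sq_le x v :
  dot n (newton_op x v) (newton_op x v) <= Lam delta Delta alpha m * dot n v (newton_op x v).
Proof.
  apply (dot_op_op_le n (newton_op x)).
  - apply Lam_pos; lra.
  - intros; apply newton_op_sub; auto.
  - apply newton_op_sym.
  - apply newton_op_nonneg.
  - apply newton_op_le.
Qed.

Variable eps : R.
Hypothesis heps : 0 < eps.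

Notation l := (lam delta alpha M).
Notation L := (Lam delta Delta alpha m).

Lemma step_eq x i k : (i < n)%nat ->
  step n W alpha f1 f2 eps x i k = x k + (- eps * newton_op x (g x) i) * kron k i.
Proof.
  intros Hi. unfold step, kron.
  destruct (Nat.eqb_spec k i) as [->|]; [rewrite Hinv_apply_eq by auto|]; ring.
Qed.

Hypothesis hn : (0 < n)%nat.

Lemma lam_inv : / lam delta alpha M = 2 * (1 - delta) + alpha * M.
Proof.
  pose proof (hmM 0 0 hn). assert (0 < alpha * M) by (apply Rmult_lt_0_compat; lra).
  unfold lam. field. lra.
Qed.

Lemma error_const_nonneg : 0 <= 2 * (2 * (1 - delta) + alpha * M) / (alpha * m).
Proof.
  pose proof (hmM 0 0 hn). assert (0 < alpha * M) by (apply Rmult_lt_0_compat; lra).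
  apply Rle_mult_inv_pos; [lra | apply Rmult_lt_0_compat; lra].
Qed.

Lemma sum_Fobj_step_le x :
  rsum n (fun i => F (step n W alpha f1 f2 eps x i)) <=
  INR n * F x - eps * dot n (g x) (newton_op x (g x))
  + eps ^ 2 / (2 * l) * dot n (newton_op x (g x)) (newton_op x (g x)).
Proof.
  rewrite <- rsum_const. unfold dot. rewrite <- !rsum_scal, <- rsum_minus, <- rsum_plus.
  apply rsum_le; intros i Hi.
  rewrite (Fobj_ext _ (fun k => x k + (- eps * newton_op x (g x) i) * kron k i))
    by (intros; apply step_eq; auto).
  eapply Rle_trans; [apply Fobj_coord_smooth; auto|].
  pose proof (hWdiag i Hi).
  assert ((- eps * newton_op x (g x) i) ^ 2 * (1 - W i i + alpha * M)
          <= (- eps * newton_op x (g x) i) ^ 2 * / l)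
    by (rewrite lam_inv; apply Rmult_le_compat_l; [apply pow2_ge_0 | lra]).
  unfold Rdiv. rewrite Rinv_mult. lra.
Qed.

Lemma gap_contraction x : 0 <= 2 * l ^ 2 - eps * L ^ 2 ->
  / INR n * rsum n (fun i => F (step n W alpha f1 f2 eps x i) - F xs)
  <= (1 - beta n alpha m M delta Delta eps) * (F x - F xs).
Proof.
  intros Hstep.
  pose proof (hmM 0 0 hn).
  assert (Hl : 0 < l) by (apply lam_pos; lra).
  assert (HL : 0 < L) by (apply Lam_pos; lra).
  assert (Hn : 0 < INR n) by (apply lt_0_INR; auto).
  pose proof (sum_Fobj_step_le x) as Hsum.
  pose proof (newton_op_ge x (g x)) as Hge.
  pose proof (newton_op_le x (g x)) as Hle.
  pose proof (newton_op_sq_le x (g x)) as Hsq.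
  pose proof (polyak_lojasiewicz x) as HPL.
  set (G := dot n (g x) (g x)) in *.
  set (Pg := dot n (g x) (newton_op x (g x))) in *.
  set (U := dot n (newton_op x (g x)) (newton_op x (g x))) in *.
  set (c := eps * (2 * l ^ 2 - eps * L ^ 2) / (2 * l)).
  assert (Hc : 0 <= c) by (apply Rle_mult_inv_pos; [apply Rmult_le_pos|]; lra).
  assert (HU : U <= L ^ 2 * G).
  { assert (L * Pg <= L * (L * G)) by (apply Rmult_le_compat_l; lra). nra. }
  assert (Hdecr : - eps * Pg + eps ^ 2 / (2 * l) * U <= - c * G).
  { assert (eps * (l * G) <= eps * Pg) by (apply Rmult_le_compat_l; lra).
    assert (eps ^ 2 / (2 * l) * U <= eps ^ 2 / (2 * l) * (L ^ 2 * G)).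
    { apply Rmult_le_compat_l; [apply Rle_mult_inv_pos; [apply pow2_ge_0|lra] | exact HU]. }
    replace (- c * G) with (- (eps * (l * G)) + eps ^ 2 / (2 * l) * (L ^ 2 * G)) by (unfold c; field; lra).
    lra. }
  assert (c * (2 * alpha * m * (F x - F xs)) <= c * G) by (apply Rmult_le_compat_l; auto).
  rewrite rsum_minus, rsum_const.
  replace ((1 - beta n alpha m M delta Delta eps) * (F x - F xs))
    with (/ INR n * (INR n * (F x - F xs) - c * (2 * alpha * m * (F x - F xs))))
    by (unfold beta, c; field; lra).
  apply Rmult_le_compat_l; [left; apply Rinv_0_lt_compat; lra | lra].
Qed.

Lemma scaled_error_sq_le xp x :
  rsum n (fun i => (sqrt (D xp i) * (x i - xs i)) ^ 2)
  <= 2 * (2 * (1 - delta) + alpha * M) / (alpha * m) * (F x - F xs).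
Proof.
  pose proof alpha_m_pos as Ham.
  pose proof (quadratic_growth x) as Hgrowth.
  apply Rle_trans with ((2 * (1 - delta) + alpha * M) * dot n (fun k => x k - xs k) (fun k => x k - xs k)).
  - unfold dot. rewrite <- rsum_scal. apply rsum_le; intros i Hi.
    pose proof (Ddiag_bounds xp i Hi). pose proof (Ddiag_pos xp i Hi).
    rewrite Rpow_mult_distr, pow2_sqrt by lra.
    replace ((x i - xs i) ^ 2) with ((x i - xs i) * (x i - xs i)) by ring.
    apply Rmult_le_compat_r; [apply Rle_0_sqr | lra].
  - apply (Rmult_le_compat_l (2 * (2 * (1 - delta) + alpha * M) / (alpha * m))) in Hgrowth.
    + eapply Rle_trans; [|exact Hgrowth]. right. field. lra.
    + apply error_const_nonneg.
Qed.

Lemma expected_gap t x0 :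
  0 <= 2 * l ^ 2 - eps * L ^ 2 -> 0 <= 1 - beta n alpha m M delta Delta eps ->
  expect n t (fun p => F (run n W alpha f1 f2 eps x0 p) - F xs)
  <= (1 - beta n alpha m M delta Delta eps) ^ t * (F x0 - F xs).
Proof.
  intros Hstep Hbeta.
  apply (expect_fold_left_le n hn (step n W alpha f1 f2 eps) (fun x => F x - F xs)); auto.
  intros x. apply gap_contraction; auto.
Qed.

Lemma expected_scaled_error t x0 :
  0 <= 2 * l ^ 2 - eps * L ^ 2 -> 0 <= 1 - beta n alpha m M delta Delta eps ->
  expect n t (fun p =>
    sqrt (rsum n (fun i => (sqrt (D (run n W alpha f1 f2 eps x0 (removelast p)) i)
                            * (run n W alpha f1 f2 eps x0 p i - xs i)) ^ 2)))
  <= sqrt (2 * (2 * (1 - delta) + alpha * M) * (1 - beta n alpha m M delta Delta eps) ^ t / (alpha * m)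
           * (F x0 - F xs)).
Proof.
  intros Hstep Hbeta.
  set (C := 2 * (2 * (1 - delta) + alpha * M) / (alpha * m)).
  assert (HC : 0 <= C) by apply error_const_nonneg.
  eapply Rle_trans.
  { apply (expect_le n hn t _ (fun p => sqrt (C * (F (run n W alpha f1 f2 eps x0 p) - F xs)))).
    intros p. apply sqrt_le_1_alt, scaled_error_sq_le. }
  eapply Rle_trans.
  { apply expect_sqrt_le; auto. intros p. apply Rmult_le_pos; [exact HC|].
    pose proof (hxs (run n W alpha f1 f2 eps x0 p)). lra. }
  apply sqrt_le_1_alt.
  rewrite (expect_scal n t C (fun p => F (run n W alpha f1 f2 eps x0 p) - F xs)).
  eapply Rle_trans; [apply Rmult_le_compat_l; [exact HC | apply expected_gap; auto]|].
  right. unfold C. field. pose proof alpha_m_pos. lra.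
Qed.

End AsyncNetworkNewton.

Theorem mainTheorem8
  (n : nat) (hn : (2 <= n)%nat)
  (alpha : R) (halpha : 0 < alpha)
  (W : nat -> nat -> R) (delta Delta : R)
  (hdelta : 0 < delta) (hdD : delta <= Delta) (hDelta : Delta < 1)
  (hWsym : forall i j, (i < n)%nat -> (j < n)%nat -> W i j = W j i)
  (hWnn : forall i j, (i < n)%nat -> (j < n)%nat -> 0 <= W i j)
  (hWlt1 : forall i j, (i < n)%nat -> (j < n)%nat -> W i j < 1)
  (hWrow : forall i, (i < n)%nat -> rsum n (fun j => W i j) = 1)
  (hWnull : forall v : vec,
      (forall i, (i < n)%nat -> v i - rsum n (fun j => W i j * v j) = 0) ->
      exists c : R, forall i, (i < n)%nat -> v i = c)
  (hWdiag : forall i, (i < n)%nat -> delta <= W i i <= Delta)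
  (f f1 f2 : nat -> R -> R) (m M L : R)
  (hf1 : forall i s, (i < n)%nat -> derivable_pt_lim (f i) s (f1 i s))
  (hf2 : forall i s, (i < n)%nat -> derivable_pt_lim (f1 i) s (f2 i s))
  (hf2c : forall i, (i < n)%nat -> continuity (f2 i))
  (hm : 0 < m)
  (hmM : forall i s, (i < n)%nat -> m <= f2 i s <= M)
  (hL : forall i a b, (i < n)%nat -> Rabs (f2 i a - f2 i b) <= L * Rabs (a - b))
  (xs : vec) (hxs : forall y : vec, Fobj n W alpha f xs <= Fobj n W alpha f y)
  (x0 : vec) (eps : R) :
  let rho := 2 * (1 - delta) / (2 * (1 - delta) + alpha * m) in
  let Lam := (1 + rho) / (2 * (1 - Delta) + alpha * m) in
  let lam := 1 / (2 * (1 - delta) + alpha * M) in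
  let beta := alpha * m * eps * (2 * lam ^ 2 - eps * Lam ^ 2) / (INR n * lam) in
  0 < eps -> eps < Rmin 1 (2 * (lam / Lam) ^ 2) ->
  (0 < beta < 1) /\
  forall t : nat, (1 <= t)%nat ->
    expect n t (fun l =>
      let xprev := run n W alpha f1 f2 eps x0 (removelast l) in
      let xt := run n W alpha f1 f2 eps x0 l in
      sqrt (rsum n (fun i =>
        (sqrt (Ddiag W alpha f2 xprev i) * (xt i - xs i)) ^ 2)))
    <= sqrt (2 * (2 * (1 - delta) + alpha * M) * (1 - beta) ^ t / (alpha * m)
             * (Fobj n W alpha f x0 - Fobj n W alpha f xs)).
Proof.
  cbv zeta. intros heps heps_lt.
  change (1 / (2 * (1 - delta) + alpha * M)) with (lam delta alpha M) in *.
  change ((1 + 2 * (1 - delta) / (2 * (1 - delta) + alpha * m)) / (2 * (1 - Delta) + alpha * m))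
    with (Lam delta Delta alpha m) in *.
  change (alpha * m * eps * (2 * lam delta alpha M ^ 2 - eps * Lam delta Delta alpha m ^ 2)
          / (INR n * lam delta alpha M)) with (beta n alpha m M delta Delta eps).
  assert (hn0 : (0 < n)%nat) by lia.
  assert (hmM0 : 0 < m <= M) by (pose proof (hmM 0%nat 0 hn0); lra).
  destruct (beta_bounds n alpha m M delta Delta eps) as [Hstep Hbeta]; auto.
  split; [exact Hbeta|].
  intros t _.
  apply expected_scaled_error; auto; lra.
Qed.
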